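(* Let $n\ge1$, $d\ge0$ be integers and let $A=(\mathbf{a}_0,\dots,\mathbf{a}_N)$ be $N+1=N(n,d)$ distinct points of $\mathbb{R}^n$. Then: (1) For each fixed $p\in\{1,\dots,n\}$, $\operatorname{Det}V(A)$, viewed as a polynomial in the coordinates of $\mathbf{a}_0,\dots,\mathbf{a}_N$, is homogeneous of degree $N(n+1,d-1)$ with respect to the $p$-th coordinates of the points $\mathbf{a}_0,\dots,\mathbf{a}_N$. (2) If $\varphi:\mathbb{R}^n\to\mathbb{R}^n$ is a linear transformation with matrix $P$, then $\operatorname{Det}V(\varphi(A))=(\operatorname{Det}P)^{N(n+1,d-1)}\operatorname{Det}V(A)$, where $\varphi(A)=(\varphi(\mathbf{a}_0),\dots,\varphi(\mathbf{a}_N))$. (3) For every $\mathbf{v}\in\mathbb{R}^n$, $\operatorname{Det}V(A-\mathbf{v})=\operatorname{Det}V(A)$, where $A-\mathbf{v}=(\mathbf{a}_0-\mathbf{v},\dots,\mathbf{a}_N-\mathbf{v})$.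
   Context: $N(a,b):=\binom{a+b}{b}$, with $N(a,-1):=0$. $I(n,d)$ is the set of multi-indices $\mathbf{j}\in\mathbb{Z}_{\ge0}^n$ with $|\mathbf{j}|\le d$, and $\mathbf{x}^{\mathbf{j}}=x_1^{j_1}\cdots x_n^{j_n}$. With a fixed ordering $\mathbf{j}_0,\dots,\mathbf{j}_N$ of $I(n,d)$, the ($n$-dimensional) Vandermonde matrix of an ordered tuple $A=(\mathbf{a}_0,\dots,\mathbf{a}_N)$ is $V(A)=(\mathbf{a}_i^{\mathbf{j}_l})_{0\le i,l\le N}$ (rows indexed by points, columns by exponents). *)

From HB Require Import structures.
From mathcomp Require Import all_boot all_order all_algebra.
From mathcomp Require Import reals.
From mathcomp Require Import mpoly.
Set Implicit Arguments. Unset Strict Implicit. Unset Printing Implicit Defensive.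
Import Order.TTheory GRing.Theory Num.Theory.
Local Open Scope ring_scope.

Definition Nbin (a b : nat) : nat := 'C(a + b, b).

(* N(a, d-1), with the convention N(a,-1) = 0 *)
Definition Nbin_pred (a d : nat) : nat :=
  match d with 0 => 0 | d'.+1 => Nbin a d' end.

Definition mdegree (n : nat) (j : {ffun 'I_n -> nat}) : nat := \sum_(k < n) j k.

(* e : 'I_(N(n,d)) -> Z_{>=0}^n is an ordering j_0,...,j_N of I(n,d):
   a bijection onto the multi-indices of degree <= d. *)
Definition is_ordering (n d : nat) (e : 'I_(Nbin n d) -> {ffun 'I_n -> nat}) :=
  [/\ injective e,
      (forall l, (mdegree (e l) <= d)%N) &
      (forall j : {ffun 'I_n -> nat}, (mdegree j <= d)%N -> exists l, e l = j)].

Definition mono (R : comNzRingType) (n : nat) (x : 'rV[R]_n) (j : {ffun 'I_n -> nat}) : R :=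
  \prod_(k < n) x ord0 k ^+ j k.

(* Vandermonde matrix V(A) = (a_i^{j_l})_{i,l}, rows = points, columns = exponents *)
Definition Vdm (R : comNzRingType) (n d : nat) (e : 'I_(Nbin n d) -> {ffun 'I_n -> nat})
  (A : 'I_(Nbin n d) -> 'rV[R]_n) : 'M[R]_(Nbin n d) :=
  \matrix_(i, l) mono (A i) (e l).

(* The generic Vandermonde matrix: its entries are polynomials in the
   N(n,d)*n indeterminates X_{(i,k)} = k-th coordinate of the i-th point. *)
Definition Vdm_gen (R : comNzRingType) (n d : nat) (e : 'I_(Nbin n d) -> {ffun 'I_n -> nat})
  : 'M[{mpoly R[Nbin n d * n]}]_(Nbin n d) :=
  \matrix_(i, l) \prod_(k < n) 'X_(mxvec_index i k) ^+ e l k.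

Definition homog_in_coord (R : comNzRingType) (N n : nat) (p : 'I_n) (D : nat)
  (P : {mpoly R[N * n]}) : Prop :=
  forall m, m \in msupp P -> (\sum_(i < N) m (mxvec_index i p))%N = D.

Definition coords (R : comNzRingType) (N n : nat) (A : 'I_N -> 'rV[R]_n) : 'I_(N * n) -> R :=
  fun v => mxvec (\matrix_(i, k) A i ord0 k) ord0 v.

From HB Require Import structures.
From mathcomp Require Import all_boot all_order all_algebra.
From mathcomp Require Import reals.
From mathcomp Require Import mpoly.
From mathcomp Require Import fingroup perm.
From mathcomp Require Import zify ring.
Set Implicit Arguments. Unset Strict Implicit. Unset Printing Implicit Defensive.
Import Order.TTheory GRing.Theory Num.Theory.

(* Write the coordinates of phi(x) as polynomials F_k. Each monomial
   phi(x)^(j_l) is then a polynomial Q_l of degree <= d, so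
   V(phi(A)) = V(A) M^T where row l of M lists the coefficients of Q_l on the
   monomials x^(j_0), ..., x^(j_N). If every F_k is c_k X_k plus terms of no
   larger degree and smaller weight, for some linear weight on monomials, then
   M is triangular for the induced order and
   det M = prod_l prod_k c_k^(j_l,k) = (prod_k c_k)^N(n+1,d-1),
   because sum_l j_l,p = N(n+1,d-1) for every p. Translations (c_k = 1) and
   triangular linear maps (c_k = P_kk) are of this form, and an arbitrary P is
   a product of such maps: P = S L U by the LUP decomposition, and a
   transposition is a product of three transvections and a dilation.
   The identity sum_l j_l,p = N(n+1,d-1) counts the pairs (j, s) with s < j_p
   through the bijection (j, s) |-> (j_p - s - 1, j with j_p replaced by s)
   onto the multi-indices in n+1 variables of degree <= d-1; it also gives the
   homogeneity in (1), since each term of the Leibniz expansion of Det V is a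
   monomial of degree sum_i j_(sigma i),p in the p-th coordinates. *)

Lemma sum_card_lt (I : finType) (f : I -> nat) m : (forall i, f i <= m) ->
  \sum_i f i = #|[set x : I * 'I_m | x.2 < f x.1]|.
Proof.
move=> f_le; rewrite -sum1dep_card.
rewrite -(pair_big_dep xpredT (fun i (s : 'I_m) => s < f i) (fun _ _ => 1)) /=.
by apply: eq_bigr => i _; rewrite (big_ord_narrow (f_le i)) sum1_card card_ord.
Qed.

Lemma mdegreeE n (j : {ffun 'I_n -> nat}) (p : 'I_n) :
  mdegree j = j p + \sum_(k < n | k != p) j k.
Proof. exact: bigD1. Qed.

Section CoordinateSum.

Variables (n d : nat) (e : 'I_(Nbin n d.+1) -> {ffun 'I_n -> nat}) (p : 'I_n).
Hypothesis e_ord : is_ordering e.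

Let S := [set x : 'I_(Nbin n d.+1) * 'I_d.+1 | x.2 < e x.1 p].
Let T := [set t : n.+1.-tuple 'I_d.+1 | \sum_(i <- t) i <= d].

Let split_coord (x : 'I_(Nbin n d.+1) * 'I_d.+1) : n.+1.-tuple 'I_d.+1 :=
  [tuple of inord (e x.1 p - x.2.+1) ::
            [tuple inord (if k == p then x.2 : nat else e x.1 k) | k < n]].

Let split_coord0 x : tnth (split_coord x) ord0 = e x.1 p - x.2.+1 :> nat.
Proof.
have [_ e_deg _] := e_ord; have := e_deg x.1; rewrite (mdegreeE _ p) => deg_x.
by rewrite tnth0 inordK //; lia.
Qed.

Let split_coordS x k : x \in S ->
  tnth (split_coord x) (lift ord0 k) = (if k == p then x.2 : nat else e x.1 k) :> nat.
Proof.
have [_ e_deg _] := e_ord; rewrite inE => lt_s.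
rewrite tnthS tnth_mktuple inordK //; case: eqVneq => [_|kp]; first exact: ltn_ord.
have := e_deg x.1; rewrite (mdegreeE _ p) (bigD1 k) //=; lia.
Qed.

Let sum_split_coord x : x \in S ->
  (\sum_(i <- split_coord x) i).+1 = mdegree (e x.1).
Proof.
move=> Sx; rewrite big_cons big_tuple split_coord0 (mdegreeE _ p).
rewrite (eq_bigr (fun k : 'I_n => if k == p then x.2 : nat else e x.1 k)) => [|k _]; last first.
  by rewrite -(split_coordS k Sx) tnthS.
rewrite (bigD1 p) //= eqxx.
move: Sx; rewrite inE => lt_s; rewrite addnA -addSn -addnS subnK //.
by congr (_ + _); apply: eq_bigr => k /negPf->.
Qed.

Let split_coord_inj : {in S &, injective split_coord}.
Proof.
have [e_inj _ _] := e_ord.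
move=> [l s] [l' s'] Sx Sx' eq_split.
have eq0 := congr1 (fun t => val (tnth t ord0)) eq_split.
have eqS k := congr1 (fun t => val (tnth t (lift ord0 k))) eq_split.
move: eq0 (eqS p); rewrite /= !split_coord0 !split_coordS // !eqxx.
move=> /= eq0 /val_inj eq_s; subst s'.
congr (_, _); apply: e_inj; apply/ffunP => k; case: (eqVneq k p) => [->|kp].
  by move: Sx Sx' eq0; rewrite !inE /=; lia.
by move: (eqS k); rewrite /= !split_coordS // (negPf kp).
Qed.

Let split_coord_onto : split_coord @: S = T.
Proof.
have [_ e_deg e_surj] := e_ord.
apply/setP => t; apply/imsetP/idP => [[x Sx ->]|].
  by rewrite inE -ltnS sum_split_coord // e_deg.
case/tupleP: t => x t; rewrite inE big_cons big_tuple => sum_t.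
pose j := [ffun k => if k == p then tnth t p + x + 1 else tnth t k : nat].
have [l ej] : exists l, e l = j.
  apply: e_surj; rewrite (mdegreeE _ p) ffunE eqxx.
  rewrite (eq_bigr (fun k => val (tnth t k))) => [|k /negPf kp]; last by rewrite ffunE kp.
  by move: sum_t; rewrite (bigD1 p) //= addn1 addSn ltnS [_ + x]addnC -addnA.
have Sx : (l, tnth t p) \in S by rewrite inE /= ej ffunE eqxx addn1 ltnS leq_addr.
exists (l, tnth t p) => //; apply: eq_from_tnth => i; apply: val_inj.
case: (unliftP ord0 i) => [k ->|->] /=.
  by rewrite split_coordS // tnthS ej ffunE; case: eqVneq => [->|].
by rewrite split_coord0 tnth0 /= ej ffunE eqxx addn1 subSS addKn.
Qed.

Lemma sum_ordering_coord_succ : \sum_l e l p = Nbin n.+1 d.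
Proof.
have [_ e_deg _] := e_ord.
rewrite (@sum_card_lt _ (fun l => e l p) d.+1) => [|l]; last first.
  by have := e_deg l; rewrite (mdegreeE _ p); lia.
rewrite -(card_in_imset split_coord_inj) split_coord_onto.
by rewrite card_partial_ord_partitions /Nbin -bin_sub ?leq_addr // addKn.
Qed.

End CoordinateSum.

Lemma sum_ordering_coord n d (e : 'I_(Nbin n d) -> {ffun 'I_n -> nat}) (p : 'I_n) :
  is_ordering e -> \sum_l e l p = Nbin_pred n.+1 d.
Proof.
case: d e => [|d] e e_ord; last exact: sum_ordering_coord_succ.
have [_ e_deg _] := e_ord.
by rewrite big1 // => l _; have := e_deg l; rewrite (mdegreeE _ p); lia.
Qed.

Local Open Scope ring_scope.

Definition mweight n (w : 'I_n -> nat) (m : 'X_{1..n}) : nat := \sum_k m k * w k.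

Lemma mweightD n (w : 'I_n -> nat) m1 m2 :
  mweight w (m1 + m2)%MM = (mweight w m1 + mweight w m2)%N.
Proof. by rewrite -big_split; apply: eq_bigr => k _; rewrite mnmDE mulnDl. Qed.

Lemma mweight0 n (w : 'I_n -> nat) : mweight w 0%MM = 0%N.
Proof. by rewrite /mweight big1 // => k _; rewrite mnm0E. Qed.

Lemma mweight1 n (w : 'I_n -> nat) k : mweight w U_(k)%MM = w k.
Proof.
rewrite /mweight (bigD1 k) //= mnm1E eqxx mul1n big1 ?addn0 // => i ik.
by rewrite mnm1E eq_sym (negPf ik).
Qed.

Section LeadTerm.

Variables (R : comNzRingType) (n : nat) (w : 'I_n -> nat).

Definition below (j m : 'X_{1..n}) :=
  (mdeg m <= mdeg j)%N && (mweight w m < mweight w j)%N.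

Definition lead_term (Q : {mpoly R[n]}) (j : 'X_{1..n}) (c : R) :=
  exists2 L : {mpoly R[n]}, Q = c *: 'X_[j] + L & {in msupp L, forall m, below j m}.

Lemma below_addl j1 j2 m : below j2 m -> below (j1 + j2)%MM (j1 + m)%MM.
Proof.
by rewrite /below !mdegD !mweightD => /andP[]; rewrite leq_add2l ltn_add2l => -> ->.
Qed.

Lemma lead_term1 : lead_term 1 0%MM 1.
Proof. by exists 0; rewrite ?addr0 ?scale1r ?mpolyX0 // => m; rewrite msupp0. Qed.

Lemma lead_termM Q1 Q2 j1 j2 c1 c2 : lead_term Q1 j1 c1 -> lead_term Q2 j2 c2 ->
  lead_term (Q1 * Q2) (j1 + j2)%MM (c1 * c2).
Proof.
move=> [L1 -> below1] [L2 -> below2].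
exists (c1 *: ('X_[j1] * L2) + c2 *: (L1 * 'X_[j2]) + L1 * L2).
  rewrite mulrDl !mulrDr -!scalerAl -!scalerAr scalerA mpolyXD.
  by rewrite mulrC !addrA.
move=> m /msuppD_le; rewrite mem_cat => /orP[/msuppD_le|].
  rewrite mem_cat => /orP[] /msuppZ_le /msuppM_le /allpairsP[[m1 m2] /= [+ + ->]].
    by rewrite msuppX inE => /eqP-> /below2 /below_addl.
  rewrite msuppX inE => + /eqP->.
  by rewrite [(j1 + j2)%MM]addmC [(m1 + j2)%MM]addmC => /below1 /below_addl.
move=> /msuppM_le /allpairsP[[m1 m2] /= [/below1 + /below2 + ->]].
by rewrite /below !mdegD !mweightD => /andP[? ?] /andP[? ?]; apply/andP; split; lia.
Qed.

Lemma lead_term_prod (I : finType) (F : I -> {mpoly R[n]}) J C :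
  (forall i, lead_term (F i) (J i) (C i)) ->
  lead_term (\prod_i F i) (\sum_i J i)%MM (\prod_i C i).
Proof.
move=> leadF; apply: (big_ind3 (fun Q j c => lead_term Q j c)) => //.
  exact: lead_term1.
by move=> ? ? ? ? ? ?; apply: lead_termM.
Qed.

Lemma lead_termX Q j c k : lead_term Q j c -> lead_term (Q ^+ k) (j *+ k)%MM (c ^+ k).
Proof.
move=> leadQ; elim: k => [|k IHk]; first by rewrite !expr0 mulm0n; exact: lead_term1.
by rewrite !exprS mulmS; apply: lead_termM.
Qed.

Lemma lead_term_supp Q j c m :
  lead_term Q j c -> m \in msupp Q -> m != j -> below j m.
Proof.
case=> L -> belowL /msuppD_le; rewrite mem_cat => /orP[/msuppZ_le|/belowL //].
by rewrite msuppX inE => ->.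
Qed.

Lemma lead_term_mdeg Q j c m :
  lead_term Q j c -> m \in msupp Q -> (mdeg m <= mdeg j)%N.
Proof.
move=> leadQ suppm; have [-> //|mj] := eqVneq m j.
by case/andP: (lead_term_supp leadQ suppm mj).
Qed.

Lemma lead_term_coef Q j c : lead_term Q j c -> Q@_j = c.
Proof.
case=> L -> belowL; rewrite mcoeffD mcoeffZ mcoeffX eqxx mulr1.
have [/belowL|] := boolP (j \in msupp L); first by rewrite /below ltnn andbF.
by rewrite -mcoeff_eq0 => /eqP->; rewrite addr0.
Qed.

End LeadTerm.

Definition is_trig_wrt (R : nmodType) m (w : 'I_m -> nat) (M : 'M[R]_m) :=
  forall i j, i != j -> M i j != 0 -> (w j < w i)%N.

Lemma det_trig_wrt (R : comPzRingType) m w (M : 'M[R]_m) :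
  is_trig_wrt w M -> \det M = \prod_i M i i.
Proof.
move=> Mtrig; rewrite /determinant (bigD1 1%g) //= odd_perm1 expr0 mul1r.
rewrite [X in _ + X]big1 ?addr0 => [|s /eqP s_neq1].
  by apply: eq_bigr => i _; rewrite perm1.
have [i /eqP Mi0|Ms_nz] := pickP (fun i => M i (s i) == 0).
  by rewrite (bigD1 i) //= Mi0 mul0r mulr0.
case: s_neq1; apply/permP => i; rewrite perm1; apply/eqP/negPn/negP => s_moves_i.
have le_ws k : (w (s k) <= w k)%N.
  have [<- //|sk] := eqVneq k (s k).
  by apply/ltnW/Mtrig => //; rewrite Ms_nz.
have : (\sum_k w (s k) < \sum_k w k)%N.
  rewrite (bigD1 i) // [X in (_ < X)%N](bigD1 i) //= -addSn leq_add ?leq_sum //.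
  by apply: Mtrig; [rewrite eq_sym | rewrite Ms_nz].
by rewrite [X in (_ < X)%N](reindex_inj (@perm_inj _ s)) ltnn.
Qed.

Lemma is_trig_wrt1 (R : nzRingType) m (w : 'I_m -> nat) : is_trig_wrt w (1%:M : 'M[R]_m).
Proof. by move=> a b ab; rewrite mxE (negPf ab) eqxx. Qed.

Lemma is_trig_wrt_transvection (R : nzRingType) m (i j : 'I_m) (c : R) : i != j ->
  is_trig_wrt (fun k => nat_of_bool (k == i)) (1%:M + c *: delta_mx i j).
Proof.
move=> ij a b ab; rewrite !mxE (negPf ab) add0r.
have [_|_] := eqVneq a i; last by rewrite mulr0 eqxx.
have [->|_] := eqVneq b j; last by rewrite mulr0 eqxx.
by rewrite [j == i]eq_sym (negPf ij).
Qed.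

Lemma is_trig_wrt_dilation (R : nzRingType) m (j : 'I_m) (c : R) :
  is_trig_wrt (fun=> 0%N) (1%:M + c *: delta_mx j j).
Proof.
move=> a b ab; rewrite !mxE (negPf ab) add0r.
have -> : (a == j) && (b == j) = false.
  by apply/negbTE; apply: contra ab => /andP[/eqP-> /eqP->].
by rewrite mulr0 eqxx.
Qed.

Lemma tperm_mx_elementary (R : comNzRingType) n (i j : 'I_n) : i != j ->
  tperm_mx i j =
    (1%:M + 1 *: delta_mx j i) *m (1%:M + (-1) *: delta_mx i j) *m
    (1%:M + 1 *: delta_mx j i) *m (1%:M + (-2) *: delta_mx j j) :> 'M[R]_n.
Proof.
move=> ij; have ji : j != i by rewrite eq_sym.
rewrite -!mulmxA !(mulmxDl, mulmxDr, mul1mx, mulmx1).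
do 3 rewrite -?scalemxAr -?scalemxAl
  ?(mul_delta_mx_cond, eqxx, negPf ij, negPf ji, mulr1n, mulr0n, scaler0, mulmx0).
apply/matrixP => a b; rewrite !mxE.
case: tpermP => [->|->|/eqP/negPf ai /eqP/negPf aj];
  rewrite ?eqxx ?(negPf ij) ?(negPf ji) ?ai ?aj /=.
all: have [bi|/negPf bi] := eqVneq b i;
  [subst b | have [bj|/negPf bj] := eqVneq b j; [subst b|]].
all: by rewrite ?eqxx ?(negPf ij) ?(negPf ji) ?bi ?bj ?(eq_sym b) /=; ring.
Qed.

Definition mnm_of n (j : {ffun 'I_n -> nat}) : 'X_{1..n} := [multinom j i | i < n].

Lemma mnm_of_inj n : injective (@mnm_of n).
Proof. by move=> j1 j2 /mnmP eq_j; apply/ffunP => i; have := eq_j i; rewrite !mnmE. Qed.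

Lemma mnm_ofE n (j : {ffun 'I_n -> nat}) : mnm_of j = (\sum_k U_(k) *+ j k)%MM.
Proof. by rewrite {1}[mnm_of j]multinomUE_id; apply: eq_bigr => k _; rewrite mnmE. Qed.

Lemma mdeg_mnm_of n (j : {ffun 'I_n -> nat}) : mdeg (mnm_of j) = mdegree j.
Proof. by rewrite mdegE; apply: eq_bigr => i _; rewrite mnmE. Qed.

Lemma mono_meval (R : comNzRingType) n (x : 'rV[R]_n) j :
  mono x j = ('X_[mnm_of j] : {mpoly R[n]}).@[x ord0].
Proof. by rewrite mevalX; apply: eq_bigr => i _; rewrite mnmE. Qed.

Lemma ordering_mnm_onto n d (e : 'I_(Nbin n d) -> {ffun 'I_n -> nat}) m :
  is_ordering e -> (mdeg m <= d)%N -> exists l, mnm_of (e l) = m.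
Proof.
case=> _ _ e_surj deg_m; have [l el] : exists l, e l = [ffun i => m i].
  by apply: e_surj; rewrite /mdegree (eq_bigr (fun i => m i)) -?mdegE // => i _; rewrite ffunE.
by exists l; apply/mnmP => i; rewrite el mnmE ffunE.
Qed.

Lemma mpoly_ordering_expansion (R : comNzRingType) n d
    (e : 'I_(Nbin n d) -> {ffun 'I_n -> nat}) (Q : {mpoly R[n]}) :
  is_ordering e -> {in msupp Q, forall m, mdeg m <= d}%N ->
  Q = \sum_l Q@_(mnm_of (e l)) *: 'X_[mnm_of (e l)].
Proof.
move=> e_ord deg_Q; have [e_inj _ _] := e_ord.
apply/mpolyP => m; rewrite raddf_sum /=.
under eq_bigr do rewrite mcoeffZ mcoeffX.
case: (pickP (fun l => mnm_of (e l) == m)) => [l0 /eqP<-|no_l].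
  rewrite (bigD1 l0) //= eqxx mulr1 big1 ?addr0 // => l /negPf l_neq.
  by rewrite (inj_eq (inj_comp (@mnm_of_inj n) e_inj)) l_neq mulr0.
rewrite big1 => [|l _]; last by rewrite no_l mulr0.
apply/eqP; rewrite mcoeff_eq0; apply: contraT => /negPn /deg_Q /(ordering_mnm_onto e_ord).
by case=> l /eqP; rewrite no_l.
Qed.

Section VandermondeDeterminant.

Variables (R : comNzRingType) (n d : nat) (e : 'I_(Nbin n d) -> {ffun 'I_n -> nat}).
Hypothesis e_ord : is_ordering e.

Definition coef_mx (Q : 'I_(Nbin n d) -> {mpoly R[n]}) : 'M[R]_(Nbin n d) :=
  \matrix_(l, l') (Q l)@_(mnm_of (e l')).

Lemma Vdm_comp (f : 'rV[R]_n -> 'rV[R]_n) Q A :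
  (forall l, {in msupp (Q l), forall m, mdeg m <= d}%N) ->
  (forall x l, mono (f x) (e l) = (Q l).@[x ord0]) ->
  Vdm e (fun i => f (A i)) = Vdm e A *m (coef_mx Q)^T.
Proof.
move=> deg_Q fQ; apply/matrixP => i l; rewrite !mxE fQ.
rewrite [Q l](mpoly_ordering_expansion e_ord (deg_Q l)) raddf_sum /=.
by apply: eq_bigr => l' _; rewrite mevalZ -mono_meval !mxE mulrC.
Qed.

Lemma det_Vdm_lead_terms (f : 'rV[R]_n -> 'rV[R]_n) w Q c A :
  (forall l, lead_term w (Q l) (mnm_of (e l)) (c l)) ->
  (forall x l, mono (f x) (e l) = (Q l).@[x ord0]) ->
  \det (Vdm e (fun i => f (A i))) = \prod_l c l * \det (Vdm e A).
Proof.
move=> leadQ fQ; have [e_inj e_deg _] := e_ord.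
rewrite (Vdm_comp A _ fQ) => [|l m /(lead_term_mdeg (leadQ l))]; last first.
  by rewrite mdeg_mnm_of => /leq_trans; apply.
rewrite det_mulmx det_tr mulrC (@det_trig_wrt _ _ (fun l => mweight w (mnm_of (e l)))).
  by congr (_ * _); apply: eq_bigr => l _; rewrite mxE (lead_term_coef (leadQ l)).
move=> l l' ll'; rewrite mxE -mcoeff_msupp => /(lead_term_supp (leadQ l)).
by rewrite (inj_eq (inj_comp (@mnm_of_inj n) e_inj)) eq_sym => /(_ ll') /andP[].
Qed.

Lemma det_Vdm_coordwise (f : 'rV[R]_n -> 'rV[R]_n) w (F : 'I_n -> {mpoly R[n]}) C A :
  (forall k, lead_term w (F k) U_(k)%MM (C k)) ->
  (forall x k, f x ord0 k = (F k).@[x ord0]) ->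
  \det (Vdm e (fun i => f (A i))) = \prod_l \prod_k C k ^+ e l k * \det (Vdm e A).
Proof.
move=> leadF fF; apply: (det_Vdm_lead_terms (w := w) (Q := fun l => \prod_k F k ^+ e l k)).
  by move=> l; rewrite mnm_ofE; apply: lead_term_prod => k; apply: lead_termX.
move=> x l; rewrite rmorph_prod; apply: eq_bigr => k _.
by rewrite rmorphXn /= fF.
Qed.

Lemma det_Vdm_translate A (v : 'rV[R]_n) :
  \det (Vdm e (fun i => A i - v)) = \det (Vdm e A).
Proof.
rewrite (det_Vdm_coordwise (f := fun x => x - v) (w := fun _ => 1%N)
          (F := fun k => 'X_k - (v ord0 k)%:MP) (C := fun _ => 1)) => [|k|x k].
- by rewrite big1 ?mul1r // => l _; rewrite big1 // => k _; rewrite expr1n.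
- exists (- (v ord0 k)%:MP); first by rewrite scale1r.
  move=> m; rewrite (perm_mem (msuppN _)) msuppC; case: eqP => // _.
  by rewrite inE => /eqP->; rewrite /below mdeg0 mdeg1 mweight0 mweight1.
- by rewrite /= mevalB mevalXU mevalC !mxE.
Qed.

Definition scales_det_Vdm (P : 'M[R]_n) := forall A,
  \det (Vdm e (fun i => (P *m (A i)^T)^T)) = \det P ^+ Nbin_pred n.+1 d * \det (Vdm e A).

Lemma scales_det_Vdm_trig P w : is_trig_wrt w P -> scales_det_Vdm P.
Proof.
move=> Ptrig A.
rewrite (det_Vdm_coordwise (f := fun x => (P *m x^T)^T) (w := w)
          (F := fun k => \sum_k' P k k' *: 'X_k') (C := fun k => P k k)) => [|k|x k].
- rewrite exchange_big /= (det_trig_wrt Ptrig) -prodrXl; congr (_ * _).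
  by apply: eq_bigr => k _; rewrite prodrXr sum_ordering_coord.
- exists (\sum_(k' | k' != k) P k k' *: 'X_k'); first by rewrite (bigD1 k).
  move=> m /msupp_sum_le /flattenP[s /mapP[k' + ->]].
  rewrite mem_filter => /andP[k'k _].
  have [->|Pkk'] := eqVneq (P k k') 0; first by rewrite scale0r msupp0.
  move=> /msuppZ_le; rewrite msuppX inE => /eqP->.
  by rewrite /below !mdeg1 !mweight1 leqnn Ptrig // eq_sym.
- rewrite /= !mxE raddf_sum /=; apply: eq_bigr => k' _.
  by rewrite mevalZ mevalXU !mxE.
Qed.

Lemma scales_det_VdmM P Q :
  scales_det_Vdm P -> scales_det_Vdm Q -> scales_det_Vdm (P *m Q).
Proof.
move=> scP scQ A; rewrite det_mulmx exprMn -mulrA -scQ -scP.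
by congr (\det _); apply/matrixP => i l; rewrite !mxE trmxK mulmxA.
Qed.

Lemma scales_det_Vdm1 : scales_det_Vdm 1%:M.
Proof. by apply: (scales_det_Vdm_trig (w := fun=> 0%N)); apply: is_trig_wrt1. Qed.

Lemma scales_det_Vdm_tperm (i j : 'I_n) : scales_det_Vdm (tperm_mx i j).
Proof.
have [<-|ij] := eqVneq i j.
  by rewrite /tperm_mx tperm1 perm_mx1; apply: scales_det_Vdm1.
have ji : j != i by rewrite eq_sym.
rewrite (tperm_mx_elementary _ ij).
apply: scales_det_VdmM; last by apply: scales_det_Vdm_trig; apply: is_trig_wrt_dilation.
do 2 (apply: scales_det_VdmM;
       last by apply: scales_det_Vdm_trig; apply: is_trig_wrt_transvection).
by apply: scales_det_Vdm_trig; apply: is_trig_wrt_transvection.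
Qed.

Lemma scales_det_Vdm_perm (s : 'S_n) : scales_det_Vdm (perm_mx s).
Proof.
have [ts -> _] := prod_tpermP s; elim: ts => [|t ts IHts].
  by rewrite big_nil perm_mx1; apply: scales_det_Vdm1.
by rewrite big_cons perm_mxM; apply: scales_det_VdmM => //; apply: scales_det_Vdm_tperm.
Qed.

End VandermondeDeterminant.

Lemma scales_det_Vdm_all (F : fieldType) n d (e : 'I_(Nbin n.+1 d) -> {ffun 'I_n.+1 -> nat})
    (P : 'M[F]_n.+1) :
  is_ordering e -> scales_det_Vdm e P.
Proof.
move=> e_ord; have := cormen_lup_correct P; have := cormen_lup_perm P.
have := @cormen_lup_lower _ _ P; have := @cormen_lup_upper _ _ P.
case: cormen_lup => [[Pm L] U] /= U_upper L_lower /is_perm_mxP[s ->] LUP.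
have -> : P = perm_mx s^-1 *m L *m U.
  by rewrite !mulmxE -mulrA -LUP mulrA -!mulmxE -perm_mxM mulVg perm_mx1 mul1mx.
apply: scales_det_VdmM; first apply: scales_det_VdmM.
- exact: scales_det_Vdm_perm.
- apply: (scales_det_Vdm_trig e_ord (w := val)) => i j ij.
  by rewrite ltnNge; apply: contraNN => /L_lower->; rewrite (negPf ij).
- apply: (scales_det_Vdm_trig e_ord (w := fun i => (n - i)%N)) => i j ij.
  apply: contraNT; rewrite -leqNgt => le_ij; apply/eqP/U_upper.
  by move: ij le_ij (ltn_ord j); rewrite -(inj_eq (@ord_inj _)); lia.
Qed.

Lemma meval_det_Vdm_gen (R : comNzRingType) n d (e : 'I_(Nbin n d) -> {ffun 'I_n -> nat})
    (A : 'I_(Nbin n d) -> 'rV[R]_n) :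
  (\det (Vdm_gen R e)).@[coords A] = \det (Vdm e A).
Proof.
rewrite -det_map_mx; congr (\det _); apply/matrixP => i l.
rewrite !mxE rmorph_prod; apply: eq_bigr => k _.
by rewrite rmorphXn /= mevalXU /coords mxvecE mxE.
Qed.

Lemma mxvec_index_eq m n (i i' : 'I_m) (k k' : 'I_n) :
  (mxvec_index i k == mxvec_index i' k') = (i == i') && (k == k').
Proof.
apply/eqP/andP => [|[/eqP-> /eqP->] //].
by move=> /cast_ord_inj /enum_rank_inj [-> ->].
Qed.

Lemma mnm_mxvecE m n (c : 'I_m -> 'I_n -> nat) i k :
  (\sum_i' \sum_k' U_(mxvec_index i' k') *+ c i' k')%MM (mxvec_index i k) = c i k.
Proof.
rewrite mnm_sumE (bigD1 i) //= [X in (_ + X)%N]big1 => [|i' i'i]; last first.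
  by rewrite mnm_sumE big1 // => k' _; rewrite mulmnE mnm1E mxvec_index_eq (negPf i'i).
rewrite addn0 mnm_sumE (bigD1 k) //= [X in (_ + X)%N]big1 => [|k' k'k]; last first.
  by rewrite mulmnE mnm1E mxvec_index_eq eqxx (negPf k'k).
by rewrite mulmnE mnm1E eqxx mul1n addn0.
Qed.

Lemma homog_det_Vdm_gen (R : comNzRingType) n d (e : 'I_(Nbin n d) -> {ffun 'I_n -> nat})
    (p : 'I_n) :
  is_ordering e -> homog_in_coord p (Nbin_pred n.+1 d) (\det (Vdm_gen R e)).
Proof.
move=> e_ord m; rewrite /determinant => /msupp_sum_le /flattenP[_ /mapP[s _ ->]].
pose mu := (\sum_i \sum_k U_(mxvec_index i k) *+ e (s i) k)%MM.
have -> : \prod_i Vdm_gen R e i (s i) = 'X_[mu].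
  rewrite /mu -mprodXE; apply: eq_bigr => i _; rewrite mxE -mprodXnE.
  by apply: eq_bigr => k _; rewrite mpolyXn.
have supp_term : msupp ((-1) ^+ s * 'X_[mu] : {mpoly R[Nbin n d * n]}) =i [:: mu].
  move=> m'; case: odd_perm;
    by rewrite ?expr1 ?expr0 ?mulN1r ?mul1r ?(perm_mem (msuppN _)) msuppX.
rewrite supp_term inE => /eqP->.
rewrite -(sum_ordering_coord p e_ord) [RHS](reindex_inj (@perm_inj _ s)) /=.
by apply: eq_bigr => i _; rewrite mnm_mxvecE.
Qed.

Theorem proposition2p3 (R : realType) (n d : nat)
  (e : 'I_(Nbin n d) -> {ffun 'I_n -> nat})
  (A : 'I_(Nbin n d) -> 'rV[R]_n) :
  (0 < n)%N -> is_ordering e -> injective A ->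
  [/\ (* (1) evaluation of the generic determinant at A is Det V(A), and it is
         homogeneous of degree N(n+1,d-1) in each coordinate block *)
      (\det (Vdm_gen R e)).@[coords A]
        = \det (Vdm e A)
      /\ (forall p : 'I_n, homog_in_coord p (Nbin_pred n.+1 d) (\det (Vdm_gen R e))),
      (* (2) *)
      (forall P : 'M[R]_n,
         \det (Vdm e (fun i => (P *m (A i)^T)^T))
           = (\det P) ^+ (Nbin_pred n.+1 d) * \det (Vdm e A)) &
      (* (3) *)
      (forall v : 'rV[R]_n, \det (Vdm e (fun i => A i - v)) = \det (Vdm e A))].
Proof.
(* The three identities hold for arbitrary, not necessarily distinct, points. *)
case: n => // n in e A * => _ e_ord _.
split; first split.
- exact: meval_det_Vdm_gen.
- by move=> p; apply: homog_det_Vdm_gen.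
- by move=> P; apply: scales_det_Vdm_all.
- by move=> v; apply: det_Vdm_translate.
Qed.
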